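(* Let $(X,d)$ be a quasi-pseudometric space. If every $\bar d$-bounded sequence in $X$ contains a $d^s$-convergent subsequence, then $X$ is right Smyth complete, i.e. every right $d$-$K$-Cauchy sequence in $X$ is $d^s$-convergent.
   Context: A quasi-pseudometric on $X$ is a map $d:X\times X\to[0,\infty)$ with $d(x,x)=0$ and $d(x,z)\le d(x,y)+d(y,z)$ for all $x,y,z$. Its conjugate is $\bar d(x,y)=d(y,x)$ and $d^s(x,y)=\max\{d(x,y),d(y,x)\}$ (a pseudometric); $x_n$ is $d^s$-convergent to $x$ iff $d(x,x_n)\to0$ and $d(x_n,x)\to0$. A set $Y\subseteq X$ is $\bar d$-bounded if there are $x\in X$, $r>0$ with $\bar d(x,y)\le r$ for all $y\in Y$; a sequence is $\bar d$-bounded if its set of terms is. A sequence $(x_n)$ is right $d$-$K$-Cauchy if for every $\varepsilon>0$ there is $n_\varepsilon$ such that $d(x_m,x_n)<\varepsilon$ whenever $n_\varepsilon\le n<m$. *)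

From Stdlib Require Import Reals.
Open Scope R_scope.

Definition quasi_pseudometric {X : Type} (d : X -> X -> R) : Prop :=
  (forall x y, 0 <= d x y) /\
  (forall x, d x x = 0) /\
  (forall x y z, d x z <= d x y + d y z).

Definition conj_qpm {X : Type} (d : X -> X -> R) : X -> X -> R :=
  fun x y => d y x.

Definition sym_qpm {X : Type} (d : X -> X -> R) : X -> X -> R :=
  fun x y => Rmax (d x y) (d y x).

Definition ds_converges_to {X : Type} (d : X -> X -> R) (u : nat -> X) (x : X) : Prop :=
  forall eps, 0 < eps -> exists N, forall n, (N <= n)%nat -> sym_qpm d x (u n) < eps.

Definition ds_convergent {X : Type} (d : X -> X -> R) (u : nat -> X) : Prop :=
  exists x, ds_converges_to d u x.

Definition bounded_set {X : Type} (e : X -> X -> R) (Y : X -> Prop) : Prop :=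
  exists x r, 0 < r /\ forall y, Y y -> e x y <= r.

Definition bounded_seq {X : Type} (e : X -> X -> R) (u : nat -> X) : Prop :=
  bounded_set e (fun y => exists n, u n = y).

Definition strictly_increasing (phi : nat -> nat) : Prop :=
  forall n m, (n < m)%nat -> (phi n < phi m)%nat.

Definition right_K_Cauchy {X : Type} (d : X -> X -> R) (u : nat -> X) : Prop :=
  forall eps, 0 < eps -> exists N, forall n m, (N <= n)%nat -> (n < m)%nat ->
    d (u m) (u n) < eps.

Definition right_Smyth_complete {X : Type} (d : X -> X -> R) : Prop :=
  forall u : nat -> X, right_K_Cauchy d u -> ds_convergent d u.

(* A right K-Cauchy sequence is, beyond some index N, within conjugate distance 1
   of u N, and its finitely many earlier terms are trivially close, so it is
   conj_qpm d-bounded.  The hypothesis then yields a d^s-convergent subsequence,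
   and the triangle inequality, used once in each direction, transfers the limit
   of the subsequence to the whole K-Cauchy sequence. *)

From Stdlib Require Import Reals Lra Lia Arith.
Open Scope R_scope.

Lemma nat_prefix_bounded (f : nat -> R) (N : nat) :
  exists r, 0 < r /\ forall k, (k <= N)%nat -> f k <= r.
Proof.
  induction N as [|N [r [Hr Hbound]]].
  - exists (Rabs (f 0%nat) + 1).
    pose proof (Rabs_pos (f 0%nat)); pose proof (RRle_abs (f 0%nat)).
    split; [lra|].
    intros k Hk; replace k with 0%nat by lia; lra.
  - exists (r + Rabs (f (S N))).
    pose proof (Rabs_pos (f (S N))); pose proof (RRle_abs (f (S N))).
    split; [lra|].
    intros k Hk; destruct (Nat.eq_dec k (S N)) as [-> | Hne].
    + lra.
    + assert (f k <= r) by (apply Hbound; lia); lra.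
Qed.

Lemma strictly_increasing_ge (phi : nat -> nat) :
  strictly_increasing phi -> forall k, (k <= phi k)%nat.
Proof.
  intros Hphi k; induction k as [|k IH]; [lia|].
  specialize (Hphi k (S k) (Nat.lt_succ_diag_r k)); lia.
Qed.

Lemma sym_qpm_lt {X : Type} (d : X -> X -> R) (x y : X) (eps : R) :
  sym_qpm d x y < eps -> d x y < eps /\ d y x < eps.
Proof.
  unfold sym_qpm; intros H.
  pose proof (Rmax_l (d x y) (d y x)); pose proof (Rmax_r (d x y) (d y x)).
  split; lra.
Qed.

Lemma right_K_Cauchy_conj_bounded {X : Type} (d : X -> X -> R) (u : nat -> X) :
  right_K_Cauchy d u -> bounded_seq (conj_qpm d) u.
Proof.
  intros Hcauchy.
  destruct (Hcauchy 1 Rlt_0_1) as [N HN].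
  destruct (nat_prefix_bounded (fun k => d (u k) (u N)) N) as [r [Hr Hprefix]].
  exists (u N), (r + 1); split; [lra|].
  intros y [n <-]; unfold conj_qpm.
  destruct (le_lt_dec n N) as [Hle | Hlt].
  - specialize (Hprefix n Hle); simpl in Hprefix; lra.
  - specialize (HN N n (Nat.le_refl N) Hlt); lra.
Qed.

Lemma right_K_Cauchy_subseq_limit {X : Type} (d : X -> X -> R)
    (u : nat -> X) (phi : nat -> nat) (x : X) :
  (forall a b c, d a c <= d a b + d b c) ->
  right_K_Cauchy d u -> strictly_increasing phi ->
  ds_converges_to d (fun n => u (phi n)) x -> ds_converges_to d u x.
Proof.
  intros Htri Hcauchy Hphi Hsub eps Heps.
  pose proof (strictly_increasing_ge phi Hphi) as Hge.
  destruct (Hsub (eps / 2) ltac:(lra)) as [K HK].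
  destruct (Hcauchy (eps / 2) ltac:(lra)) as [N HN].
  set (M := Nat.max K N).
  exists (S (phi M)); intros n Hn.
  assert (HM := Hge M).
  unfold sym_qpm; apply Rmax_lub_lt.
  - (* pass through a subsequence term lying beyond u n *)
    set (k := Nat.max K (S n)).
    assert (Hk := Hge k).
    destruct (sym_qpm_lt d x (u (phi k)) (eps / 2) (HK k ltac:(lia))) as [Hxk _].
    assert (Hkn : d (u (phi k)) (u n) < eps / 2) by (apply HN; lia).
    pose proof (Htri x (u (phi k)) (u n)); lra.
  - destruct (sym_qpm_lt d x (u (phi M)) (eps / 2) (HK M ltac:(lia))) as [_ HMx].
    assert (HnM : d (u n) (u (phi M)) < eps / 2) by (apply HN; lia).
    pose proof (Htri (u n) (u (phi M)) x); lra.
Qed.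

Theorem mainTheorem2 (X : Type) (d : X -> X -> R) :
  quasi_pseudometric d ->
  (forall u : nat -> X, bounded_seq (conj_qpm d) u ->
     exists phi : nat -> nat, strictly_increasing phi /\
       ds_convergent d (fun n => u (phi n))) ->
  right_Smyth_complete d.
Proof.
  intros [_ [_ Htri]] Hcompact u Hcauchy.
  destruct (Hcompact u (right_K_Cauchy_conj_bounded d u Hcauchy))
    as [phi [Hphi [x Hx]]].
  exists x; exact (right_K_Cauchy_subseq_limit d u phi x Htri Hcauchy Hphi Hx).
Qed.
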